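(* Let $\varepsilon=(\varepsilon_n)_{n\in\mathbb{Z}}$ be i.i.d. with $\mathbb{P}(\varepsilon_n=1)=\mathbb{P}(\varepsilon_n=-1)=1/2$, let $a_0,a_1\in\mathbb{R}$, and let $\omega_n=a_0\varepsilon_n+a_1\varepsilon_{n-1}$. Write $\omega_n=f(X_n)$ with $X_n=(\varepsilon_{n-1},\varepsilon_n)$, a Markov chain on $\Sigma=\{-1,+1\}^2$ started at its invariant (uniform) distribution, and $f(x_0,x_1)=a_0x_1+a_1x_0$. Then the Perron–Frobenius eigenvalue of the matrix $A(0,\beta,0)=\sum_{t\ge1}M(t,\beta,0)$ is $$\lambda(\beta)=\cosh(a_0\beta)\cosh(a_1\beta)\left(1+K(1)\left(\frac{\cosh((a_0+a_1)\beta)}{\cosh(a_0\beta)\cosh(a_1\beta)}-1\right)\right),$$ so that the annealed critical point of the pinning model with this disorder is $h_c^a(\beta)=-\log\lambda(\beta)$.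
   Context: $K(n)$, $n\ge1$, is a probability distribution on $\{1,2,\dots\}$ with $K(n)>0$ for all $n$ (the interarrival law of a recurrent renewal process $\tau$ with $\tau_0=0$). For a Markov chain with transition matrix $Q$ on finite $\Sigma$ and $f:\Sigma\to\mathbb{R}$, $M(t,\beta,h)(x,y)=K(t)Q^t(x,y)e^{\beta f(y)+h}$. The annealed critical point is $h_c^a(\beta)=\sup\{h: \lim_N \frac1N\log\mathbb{E}Z_{N,\beta,h,\omega}=0\}$, where $Z_{N,\beta,h,\omega}=E\big[\exp\big(\sum_{n=1}^N(\beta\omega_n+h)\mathbf 1_{\{n\in\tau\}}\big)\mathbf 1_{\{N\in\tau\}}\big]$ and $\mathbb{E}$ averages over $\omega$. *)

From Stdlib Require Import Reals Lra Lia Arith List.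
Open Scope R_scope.

(* State space Sigma = {-1,+1}^2, encoded as bool*bool; a state
   x = (x0, x1) stands for (eps_{n-1}, eps_n). *)
Definition sgn (b : bool) : R := if b then 1 else -1.
Definition Sigma := (bool * bool)%type.

Definition sumS (g : Sigma -> R) : R :=
  g (false, false) + g (false, true) + g (true, false) + g (true, true).

Definition mat := Sigma -> Sigma -> R.
Definition mmul (A B : mat) : mat := fun x y => sumS (fun z => A x z * B z y).
Definition mvec (A : mat) (v : Sigma -> R) : Sigma -> R :=
  fun x => sumS (fun y => A x y * v y).
Definition idm : mat := fun x y => if (Bool.eqb (fst x) (fst y) && Bool.eqb (snd x) (snd y))%bool then 1 else 0.
Fixpoint mpow (A : mat) (t : nat) : mat :=
  match t with O => idm | S t' => mmul (mpow A t') A end.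

(* Transition matrix of X_n = (eps_{n-1}, eps_n): (x0,x1) -> (x1, +-1) w.p. 1/2. *)
Definition Q : mat := fun x y => if Bool.eqb (fst y) (snd x) then 1/2 else 0.

Definition fobs (a0 a1 : R) (x : Sigma) : R := a0 * sgn (snd x) + a1 * sgn (fst x).

Definition Mmat (K : nat -> R) (a0 a1 : R) (t : nat) (beta h : R) : mat :=
  fun x y => K t * mpow Q t x y * exp (beta * fobs a0 a1 y + h).

Definition is_A0 (K : nat -> R) (a0 a1 beta : R) (A : mat) : Prop :=
  forall x y, infinite_sum (fun n => Mmat K a0 a1 (S n) beta 0 x y) (A x y).

(* Perron-Frobenius eigenvalue: lam is an eigenvalue with a strictly positive
   eigenvector, and lam is the spectral radius: every complex eigenvalue
   mu = a + i b (eigenvector u + i w <> 0) satisfies |mu| <= lam. *)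
Definition PF_eigenvalue (A : mat) (lam : R) : Prop :=
  0 <= lam /\
  (exists v : Sigma -> R, (forall x, 0 < v x) /\ forall x, mvec A v x = lam * v x) /\
  (forall (a b : R) (u w : Sigma -> R),
      (exists x, u x <> 0 \/ w x <> 0) ->
      (forall x, mvec A u x = a * u x - b * w x) ->
      (forall x, mvec A w x = b * u x + a * w x) ->
      a ^ 2 + b ^ 2 <= lam ^ 2).

Fixpoint rsum (n : nat) (g : nat -> R) : R :=
  match n with O => 0 | S m => rsum m g + g m end.

(* Partition function for a fixed environment w (w n = omega_n):
   Z_N = E[exp(sum_{n=1}^N (beta w_n + h) 1_{n in tau}) 1_{N in tau}],
   computed by decomposing on the last renewal before N (tau_0 = 0):
   Z_0 = 1,  Z_N = sum_{t=1}^N Z_{N-t} K(t) e^{beta w_N + h}.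
   The first argument is fuel (>= N suffices). *)
Fixpoint Zfuel (K : nat -> R) (w : nat -> R) (beta h : R) (fuel N : nat) : R :=
  match N with
  | O => 1
  | S _ =>
    match fuel with
    | O => 0
    | S f => rsum N (fun i => Zfuel K w beta h f (N - S i) * K (S i)
                              * exp (beta * w N + h))
    end
  end.
Definition Zpart (K : nat -> R) (w : nat -> R) (beta h : R) (N : nat) : R :=
  Zfuel K w beta h N N.

(* Averaging over eps_0, ..., eps_{n-1} i.i.d. uniform on {-1,+1}
   (the remaining coordinates are set to 0 and never used). *)
Definition upd (e : nat -> R) (k : nat) (v : R) : nat -> R :=
  fun j => if Nat.eqb j k then v else e j.
Fixpoint eps_avg (n : nat) (F : (nat -> R) -> R) : R :=
  match n with
  | O => F (fun _ => 0)
  | S m => (eps_avg m (fun e => F (upd e m 1)) + eps_avg m (fun e => F (upd e m (-1)))) / 2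
  end.

(* omega_n = a0 eps_n + a1 eps_{n-1}  (only used for n >= 1) *)
Definition omega (a0 a1 : R) (e : nat -> R) (n : nat) : R := a0 * e n + a1 * e (pred n).

(* Annealed partition function E Z_{N,beta,h,omega}: Z_N depends on eps_0..eps_N. *)
Definition EZ (K : nat -> R) (a0 a1 beta h : R) (N : nat) : R :=
  eps_avg (S N) (fun e => Zpart K (omega a0 a1 e) beta h N).

Definition annealed_fe_zero (K : nat -> R) (a0 a1 beta h : R) : Prop :=
  Un_cv (fun n => ln (EZ K a0 a1 beta h (S n)) / INR (S n)) 0.

Definition is_hca (K : nat -> R) (a0 a1 beta hc : R) : Prop :=
  is_lub (fun h => annealed_fe_zero K a0 a1 beta h) hc.

Definition lambda_formula (K : nat -> R) (a0 a1 beta : R) : R :=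
  cosh (a0 * beta) * cosh (a1 * beta) *
  (1 + K 1%nat * (cosh ((a0 + a1) * beta) / (cosh (a0 * beta) * cosh (a1 * beta)) - 1)).

From Stdlib Require Import Reals Lra Lia Arith FunctionalExtensionality.
Open Scope R_scope.

(* Since Q^t = 1/4 for t >= 2, the series A(0,beta,0) has the closed form
   A(x,y) = e^{beta f(y)} (K(1) Q(x,y) + (1 - K(1))/4).  Its range consists of vectors
   depending only on the second coordinate, and on those A is the rank-one map
   v |-> <c, v> g; hence lambda = <c, g> is its only nonzero eigenvalue, with the
   positive eigenvector g.

   For the annealed critical point, decomposing Z_{n+1} on the last renewal and
   averaging the two signs entering omega_{n+1} gives the renewal equation
   E Z_{n+1} = sum_{t=1}^{n} psi(t) E Z_{n+1-t} + kappa(n+1), with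
   sum_t psi(t) = e^h lambda.  A positive solution of such an equation grows
   exponentially when sum psi > 1, and is bounded and decays at most subexponentially
   when sum psi = 1; so the annealed free energy vanishes at h = -log lambda and not
   beyond it. *)

Lemma rsum_ext n f g : (forall i, (i < n)%nat -> f i = g i) -> rsum n f = rsum n g.
Proof.
  induction n as [|n IHn]; intros Hfg; simpl; [reflexivity|].
  rewrite IHn, Hfg by (intros; try apply Hfg; lia); reflexivity.
Qed.

Lemma rsum_le n f g : (forall i, (i < n)%nat -> f i <= g i) -> rsum n f <= rsum n g.
Proof.
  induction n as [|n IHn]; intros Hfg; simpl; [lra|].
  apply Rplus_le_compat; [apply IHn; intros; apply Hfg|apply Hfg]; lia.
Qed.

Lemma rsum_const0 n : rsum n (fun _ => 0) = 0.
Proof. induction n as [|n IHn]; simpl; [|rewrite IHn]; ring. Qed.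

Lemma rsum_nonneg n f : (forall i, (i < n)%nat -> 0 <= f i) -> 0 <= rsum n f.
Proof. intros Hf. rewrite <- (rsum_const0 n). now apply rsum_le. Qed.

Lemma rsum_scal_l n c f : rsum n (fun i => c * f i) = c * rsum n f.
Proof. induction n as [|n IHn]; simpl; [|rewrite IHn]; ring. Qed.

Lemma rsum_add n m f : rsum (n + m) f = rsum n f + rsum m (fun i => f (n + i)%nat).
Proof.
  induction m as [|m IHm]; simpl; [rewrite Nat.add_0_r; ring|].
  rewrite Nat.add_succ_r; simpl; rewrite IHm; ring.
Qed.

Lemma rsum_first n f : rsum (S n) f = f O + rsum n (fun i => f (S i)).
Proof. rewrite <- Nat.add_1_l, rsum_add; simpl; ring. Qed.

Lemma rsum_mono n m f :
  (n <= m)%nat -> (forall i, 0 <= f i) -> rsum n f <= rsum m f.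
Proof.
  intros Hnm Hf. replace m with (n + (m - n))%nat by lia. rewrite rsum_add.
  enough (0 <= rsum (m - n) (fun i => f (n + i)%nat)) by lra.
  now apply rsum_nonneg.
Qed.

Lemma rsum_sum_f_R0 n f : rsum (S n) f = sum_f_R0 f n.
Proof. induction n as [|n IHn]; simpl in *; [ring|now rewrite <- IHn]. Qed.

Lemma Un_cv_affine u l a b : Un_cv u l -> Un_cv (fun n => a * u n + b) (a * l + b).
Proof.
  intros Hu. assert (Hcst : forall c, Un_cv (fun _ => c) c).
  { intros c eps Heps; exists O; intros; unfold Rdist; rewrite Rminus_diag, Rabs_R0; lra. }
  apply CV_plus; [apply CV_mult|]; auto.
Qed.

Lemma Un_cv_div_INR_S c : Un_cv (fun n => c / INR (S n)) 0.
Proof.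
  intros eps Heps. destruct (INR_unbounded (Rabs c / eps)) as [N HN].
  exists N; intros n Hn. unfold Rdist; rewrite Rminus_0_r.
  assert (HSn : INR N < INR (S n)) by (apply lt_INR; lia).
  assert (Hpos : 0 < INR (S n)) by (apply lt_0_INR; lia).
  unfold Rdiv; rewrite Rabs_mult, Rabs_inv, (Rabs_pos_eq (INR (S n))) by lra.
  apply (Rmult_lt_reg_r (INR (S n))); [lra|].
  rewrite Rmult_assoc, Rinv_l, Rmult_1_r by lra.
  apply Rgt_lt in HN. apply (Rmult_lt_compat_r eps) in HN; [|lra].
  unfold Rdiv in HN; rewrite Rmult_assoc, Rinv_l, Rmult_1_r in HN by lra. nra.
Qed.

Lemma infinite_sum_partial_le f l :
  (forall n, 0 <= f n) -> infinite_sum f l -> forall n, sum_f_R0 f n <= l.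
Proof.
  intros Hf Hl n. apply growing_ineq; auto.
  intro k; simpl; specialize (Hf (S k)); lra.
Qed.

Lemma exp_le_compat x y : x <= y -> exp x <= exp y.
Proof. intros [Hxy|Hxy]; [left; now apply exp_increasing|now rewrite Hxy; right]. Qed.

Lemma ln_le_compat x y : 0 < x -> x <= y -> ln x <= ln y.
Proof. intros Hx [Hxy|Hxy]; [left; now apply ln_increasing|now rewrite Hxy; right]. Qed.

Definition fst_invariant (v : Sigma -> R) : Prop :=
  forall p p' s, v (p, s) = v (p', s).

Lemma sumS_ext f g : (forall x, f x = g x) -> sumS f = sumS g.
Proof. intros Hfg; unfold sumS; now rewrite !Hfg. Qed.

Lemma real_2x2_kernel a b p q :
  a ^ 2 + b ^ 2 <> 0 -> a * p - b * q = 0 -> b * p + a * q = 0 -> p = 0 /\ q = 0.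
Proof.
  intros Hab H1 H2. split; apply (Rmult_eq_reg_l (a ^ 2 + b ^ 2)); auto.
  - transitivity (a * (a * p - b * q) + b * (b * p + a * q)); [ring|rewrite H1, H2; ring].
  - transitivity (a * (b * p + a * q) - b * (a * p - b * q)); [ring|rewrite H1, H2; ring].
Qed.

Section RankOne.
Variables (A : mat) (hv c : Sigma -> R).
Hypothesis A_fst_invariant : forall v, fst_invariant (mvec A v).
Hypothesis A_rank_one : forall v, fst_invariant v ->
  forall x, mvec A v x = hv x * sumS (fun y => c y * v y).

Let eig := sumS (fun y => c y * hv y).

Lemma covec_eigen v :
  fst_invariant v -> sumS (fun y => c y * mvec A v y) = eig * sumS (fun y => c y * v y).
Proof.
  intros Hv. rewrite (sumS_ext _ (fun y => c y * (hv y * sumS (fun z => c z * v z))))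
    by (intros; now rewrite A_rank_one).
  unfold eig, sumS; ring.
Qed.

(* An eigenvalue a + i b with a^2 + b^2 <> 0 has its eigenvector in the range
   of A, hence fst-invariant, where A acts as the rank-one map v |-> <c, v> hv. *)
Lemma complex_eigenvalue_rank_one a b u w :
  (exists x, u x <> 0 \/ w x <> 0) ->
  (forall x, mvec A u x = a * u x - b * w x) ->
  (forall x, mvec A w x = b * u x + a * w x) ->
  a ^ 2 + b ^ 2 = 0 \/ (a = eig /\ b = 0).
Proof.
  intros [x0 Hx0] Hu Hw.
  destruct (Req_dec (a ^ 2 + b ^ 2) 0) as [Hab|Hab]; [now left|right].
  assert (Hrange : forall v k l, (forall x, v x = k * mvec A u x + l * mvec A w x) ->
            fst_invariant v).
  { intros v k l Hv p p' s. now rewrite !Hv, (A_fst_invariant u p p'), (A_fst_invariant w p p'). }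
  assert (Hu_inv : fst_invariant u).
  { apply (Hrange u (a / (a ^ 2 + b ^ 2)) (b / (a ^ 2 + b ^ 2))).
    intros x; rewrite Hu, Hw; field; auto. }
  assert (Hw_inv : fst_invariant w).
  { apply (Hrange w (- b / (a ^ 2 + b ^ 2)) (a / (a ^ 2 + b ^ 2))).
    intros x; rewrite Hu, Hw; field; auto. }
  set (cu := sumS (fun y => c y * u y)). set (cw := sumS (fun y => c y * w y)).
  assert (Hcu : eig * cu = a * cu - b * cw).
  { unfold cu; rewrite <- covec_eigen by exact Hu_inv.
    rewrite (sumS_ext _ (fun y => c y * (a * u y - b * w y))) by (intros; now rewrite Hu).
    unfold cu, cw, sumS; ring. }
  assert (Hcw : eig * cw = b * cu + a * cw).
  { unfold cw; rewrite <- covec_eigen by exact Hw_inv.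
    rewrite (sumS_ext _ (fun y => c y * (b * u y + a * w y))) by (intros; now rewrite Hw).
    unfold cu, cw, sumS; ring. }
  destruct (Req_dec ((eig - a) ^ 2 + (- b) ^ 2) 0) as [Hl|Hl]; [|exfalso].
  { pose proof (Rle_0_sqr (eig - a)); pose proof (Rle_0_sqr b).
    assert (Hsq : Rsqr (eig - a) + Rsqr b = 0) by (rewrite <- Hl; unfold Rsqr; ring).
    assert (Ha : Rsqr (eig - a) = 0) by lra. assert (Hb : Rsqr b = 0) by lra.
    apply Rsqr_0_uniq in Ha, Hb; split; lra. }
  destruct (real_2x2_kernel (eig - a) (- b) cu cw Hl ltac:(lra) ltac:(lra)) as [Hcu0 Hcw0].
  destruct (real_2x2_kernel a b (u x0) (w x0) Hab) as [Hux Hwx]; [| |tauto].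
  - rewrite <- Hu, A_rank_one by auto. fold cu. rewrite Hcu0; ring.
  - rewrite <- Hw, A_rank_one by auto. fold cw. rewrite Hcw0; ring.
Qed.

Lemma PF_eigenvalue_rank_one :
  fst_invariant hv -> (forall x, 0 < hv x) -> 0 <= eig -> PF_eigenvalue A eig.
Proof.
  intros Hinv Hpos Heig. split; [exact Heig|split].
  - exists hv; split; [exact Hpos|]. intros x. rewrite A_rank_one by auto. fold eig; ring.
  - intros a b u w Hnz Hu Hw.
    destruct (complex_eigenvalue_rank_one a b u w Hnz Hu Hw) as [H0|[-> ->]]; nra.
Qed.
End RankOne.

Lemma eps_avg_ext n F G : (forall e, F e = G e) -> eps_avg n F = eps_avg n G.
Proof.
  revert F G; induction n as [|n IHn]; intros F G HFG; simpl; [apply HFG|].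
  rewrite (IHn (fun e => F (upd e n 1)) (fun e => G (upd e n 1))),
    (IHn (fun e => F (upd e n (-1))) (fun e => G (upd e n (-1)))); auto.
Qed.

Lemma eps_avg_scal_l n c F : eps_avg n (fun e => c * F e) = c * eps_avg n F.
Proof.
  revert F; induction n as [|n IHn]; intros F; simpl; [reflexivity|].
  rewrite (IHn (fun e => F (upd e n 1))), (IHn (fun e => F (upd e n (-1)))); field.
Qed.

Lemma eps_avg_plus n F G : eps_avg n (fun e => F e + G e) = eps_avg n F + eps_avg n G.
Proof.
  revert F G; induction n as [|n IHn]; intros F G; simpl; [reflexivity|].
  rewrite (IHn (fun e => F (upd e n 1))), (IHn (fun e => F (upd e n (-1)))); field.
Qed.

Lemma eps_avg_const n c : eps_avg n (fun _ => c) = c.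
Proof. induction n as [|n IHn]; simpl; [|rewrite IHn; field]; reflexivity. Qed.

Lemma eps_avg_rsum n m (F : nat -> (nat -> R) -> R) :
  eps_avg n (fun e => rsum m (fun i => F i e)) = rsum m (fun i => eps_avg n (F i)).
Proof.
  induction m as [|m IHm]; simpl; [apply eps_avg_const|].
  now rewrite eps_avg_plus, IHm.
Qed.

Definition depends_below (m : nat) (F : (nat -> R) -> R) : Prop :=
  forall e e', (forall j, (j < m)%nat -> e j = e' j) -> F e = F e'.

Lemma depends_below_mono m m' F : (m <= m')%nat -> depends_below m F -> depends_below m' F.
Proof. intros Hm HF e e' He. apply HF; intros; apply He; lia. Qed.

Lemma depends_below_upd m F e k v : depends_below m F -> (m <= k)%nat -> F (upd e k v) = F e.
Proof.
  intros HF Hk. apply HF. intros j Hj. unfold upd.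
  destruct (Nat.eqb_spec j k); [lia|reflexivity].
Qed.

Lemma eps_avg_unused m n F :
  depends_below m F -> (m <= n)%nat -> eps_avg n F = eps_avg m F.
Proof.
  intros HF Hmn. replace n with (m + (n - m))%nat by lia.
  induction (n - m)%nat as [|d IHd]; [now rewrite Nat.add_0_r|].
  rewrite Nat.add_succ_r; simpl; rewrite <- IHd.
  rewrite (eps_avg_ext _ _ F), (eps_avg_ext _ (fun e => F (upd e (m + d) (-1))) F); [field| |];
    intros; apply (depends_below_upd m); auto; lia.
Qed.

Definition avg_pm (g : R -> R) : R := (g 1 + g (-1)) / 2.

Lemma avg_pm_exp x : avg_pm (fun s => exp (x * s)) = cosh x.
Proof. unfold avg_pm, cosh; do 3 f_equal; ring. Qed.

Lemma eps_avg_mul_last n F g :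
  depends_below n F -> eps_avg (S n) (fun e => F e * g (e n)) = eps_avg n F * avg_pm g.
Proof.
  intros HF; simpl; unfold avg_pm.
  rewrite (eps_avg_ext _ _ (fun e => g 1 * F e)),
    (eps_avg_ext _ (fun e => F (upd e n (-1)) * g (upd e n (-1) n)) (fun e => g (-1) * F e)),
    !eps_avg_scal_l; [field| |];
    intros e; rewrite (depends_below_upd n F e n) by (auto; lia);
    unfold upd; rewrite Nat.eqb_refl; ring.
Qed.

Lemma positive_lower_bound_upto (g : nat -> R) m :
  (forall k, (1 <= k)%nat -> 0 < g k) ->
  exists D, 0 < D /\ forall k, (1 <= k <= m)%nat -> D <= g k.
Proof.
  intros Hg. induction m as [|m [D [HD HDg]]].
  - exists 1; split; [lra|intros; lia].
  - exists (Rmin D (g (S m))). split; [apply Rmin_pos; auto; apply Hg; lia|].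
    intros k Hk. destruct (Nat.eq_dec k (S m)) as [->|Hkm]; [apply Rmin_r|].
    eapply Rle_trans; [apply Rmin_l|apply HDg; lia].
Qed.

(* Induction on n: if y(m) >= D e^{s m} for m <= n, then
   y(n+1) >= D e^{s(n+1)} sum_i phi(i+1) e^{-s(i+1)} >= D e^{s(n+1)}. *)
Lemma renewal_exp_lower_bound (phi y : nat -> R) (s : R) (n1 : nat) :
  (forall t, 0 <= phi (S t)) ->
  (forall n, (1 <= n)%nat -> 0 < y n) ->
  (forall n, rsum n (fun i => phi (S i) * y (n - i)%nat) <= y (S n)) ->
  (forall n, (n1 <= n)%nat -> 1 <= rsum n (fun i => phi (S i) * exp (- s * INR (S i)))) ->
  exists D, 0 < D /\ forall n, (1 <= n)%nat -> D * exp (s * INR n) <= y n.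
Proof.
  intros Hphi Hy Hsuper Hmass.
  destruct (positive_lower_bound_upto (fun k => y k * exp (- s * INR k)) n1) as [D [HD HDy]].
  { intros k Hk; apply Rmult_lt_0_compat; [now apply Hy|apply exp_pos]. }
  exists D; split; [exact HD|].
  intros n; induction n as [n IH] using lt_wf_ind; intros Hn.
  destruct (le_lt_dec n n1) as [Hle|Hlt].
  - specialize (HDy n ltac:(lia)).
    apply (Rmult_le_compat_r (exp (s * INR n))) in HDy; [|left; apply exp_pos].
    rewrite Rmult_assoc, <- exp_plus in HDy.
    now replace (- s * INR n + s * INR n) with 0 in HDy by ring; rewrite exp_0, Rmult_1_r in HDy.
  - destruct n as [|m]; [lia|]. eapply Rle_trans; [|apply Hsuper].
    eapply Rle_trans; [|apply (rsum_le m (fun i => phi (S i) * (D * exp (s * INR (m - i)))))].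
    + rewrite (rsum_ext m _ (fun i => (D * exp (s * INR (S m))) * (phi (S i) * exp (- s * INR (S i))))).
      * rewrite rsum_scal_l. rewrite <- (Rmult_1_r (D * exp (s * INR (S m)))) at 1.
        apply Rmult_le_compat_l; [left; apply Rmult_lt_0_compat; [lra|apply exp_pos]|apply Hmass; lia].
      * intros i Hi. rewrite minus_INR, !S_INR by lia.
        replace (s * (INR m - INR i)) with (s * (INR m + 1) + - s * (INR i + 1)) by ring.
        rewrite exp_plus; ring.
    + intros i Hi. apply Rmult_le_compat_l; [apply Hphi|apply IH; lia].
Qed.

Lemma log_rate_lower (y : nat -> R) (s D : R) :
  0 < D -> (forall n, (1 <= n)%nat -> D * exp (s * INR n) <= y n) ->
  forall eps, 0 < eps -> exists N, forall n, (N <= n)%nat -> s - eps < ln (y (S n)) / INR (S n).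
Proof.
  intros HD Hy eps Heps. destruct (Un_cv_div_INR_S (ln D) eps Heps) as [N HN].
  exists N; intros n Hn. specialize (HN n Hn); unfold Rdist in HN; rewrite Rminus_0_r in HN.
  apply Rabs_def2 in HN.
  assert (HSn : 0 < INR (S n)) by (apply lt_0_INR; lia).
  assert (Hln : ln D + s * INR (S n) <= ln (y (S n))).
  { rewrite <- (ln_exp (s * INR (S n))), <- ln_mult by (auto; apply exp_pos).
    apply ln_le_compat; [apply Rmult_lt_0_compat; [lra|apply exp_pos]|apply Hy; lia]. }
  apply (Rmult_le_compat_r (/ INR (S n))) in Hln; [|left; now apply Rinv_0_lt_compat].
  replace ((ln D + s * INR (S n)) * / INR (S n)) with (ln D / INR (S n) + s) in Hln by (field; lra).
  unfold Rdiv in *; lra.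
Qed.

Lemma log_rate_upper (y : nat -> R) (B : R) :
  (forall n, 0 < y (S n) <= B) ->
  forall eps, 0 < eps -> exists N, forall n, (N <= n)%nat -> ln (y (S n)) / INR (S n) < eps.
Proof.
  intros Hy eps Heps. destruct (Un_cv_div_INR_S (ln B) eps Heps) as [N HN].
  exists N; intros n Hn. specialize (HN n Hn); unfold Rdist in HN; rewrite Rminus_0_r in HN.
  apply Rabs_def2 in HN.
  assert (HSn : 0 < INR (S n)) by (apply lt_0_INR; lia).
  assert (Hln : ln (y (S n)) <= ln B) by (apply ln_le_compat; apply Hy).
  apply (Rmult_le_compat_r (/ INR (S n))) in Hln; [|left; now apply Rinv_0_lt_compat].
  unfold Rdiv in *; lra.
Qed.

Section Renewal.
Variables (psi kap z : nat -> R).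
Hypothesis psi_nonneg : forall t, 0 <= psi (S t).
Hypothesis kap_pos : forall t, 0 < kap (S t).
Hypothesis z_renewal : forall n, z (S n) = rsum n (fun i => psi (S i) * z (n - i)%nat) + kap (S n).

Lemma renewal_pos n : (1 <= n)%nat -> 0 < z n.
Proof.
  induction n as [n IH] using lt_wf_ind; intros Hn. destruct n as [|n]; [lia|].
  rewrite z_renewal. pose proof (kap_pos n).
  enough (0 <= rsum n (fun i => psi (S i) * z (n - i)%nat)) by lra.
  apply rsum_nonneg; intros i Hi. apply Rmult_le_pos; [apply psi_nonneg|left; apply IH; lia].
Qed.

Lemma renewal_super n : rsum n (fun i => psi (S i) * z (n - i)%nat) <= z (S n).
Proof. rewrite z_renewal. pose proof (kap_pos n). lra. Qed.

Lemma renewal_bounded C :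
  infinite_sum (fun n => psi (S n)) 1 -> (forall t, kap (S t) <= C * psi (S t)) ->
  forall n, z (S n) <= C.
Proof.
  intros Hsum HC.
  assert (HC0 : 0 <= C) by (pose proof (HC O); pose proof (kap_pos O); pose proof (psi_nonneg O); nra).
  intros n; induction n as [n IH] using lt_wf_ind.
  rewrite z_renewal. eapply Rle_trans with (C * rsum (S n) (fun i => psi (S i))).
  - simpl. rewrite Rmult_plus_distr_l, <- rsum_scal_l. apply Rplus_le_compat; [|apply HC].
    apply rsum_le; intros i Hi. replace (n - i)%nat with (S (n - S i)) by lia.
    rewrite (Rmult_comm C). apply Rmult_le_compat_l; [apply psi_nonneg|apply IH; lia].
  - rewrite <- (Rmult_1_r C) at 2. apply Rmult_le_compat_l; [exact HC0|].
    rewrite rsum_sum_f_R0. now apply infinite_sum_partial_le.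
Qed.

Lemma renewal_critical C :
  infinite_sum (fun n => psi (S n)) 1 -> (forall t, kap (S t) <= C * psi (S t)) ->
  Un_cv (fun n => ln (z (S n)) / INR (S n)) 0.
Proof.
  intros Hsum HC eps Heps.
  destruct (Hsum (1 - exp (- (eps / 2)))) as [n1 Hn1].
  { enough (exp (- (eps / 2)) < exp 0) by (rewrite exp_0 in *; lra). apply exp_increasing; lra. }
  destruct (renewal_exp_lower_bound psi z (- (eps / 2)) (S n1) psi_nonneg renewal_pos renewal_super)
    as [D [HD Hlow]].
  { intros n Hn. destruct n as [|n]; [lia|].
    specialize (Hn1 n ltac:(lia)). unfold Rdist in Hn1. apply Rabs_def2 in Hn1.
    rewrite <- rsum_sum_f_R0 in Hn1.
    apply Rle_trans with (exp (eps / 2) * rsum (S n) (fun i => psi (S i))).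
    - rewrite <- (exp_0), <- (Rplus_opp_r (eps / 2)), exp_plus.
      apply Rmult_le_compat_l; [left; apply exp_pos|lra].
    - rewrite <- rsum_scal_l. apply rsum_le; intros i Hi. rewrite Rmult_comm.
      apply Rmult_le_compat_l; [apply psi_nonneg|apply exp_le_compat].
      rewrite Ropp_involutive, S_INR. pose proof (pos_INR i). nra. }
  destruct (log_rate_lower z _ D HD Hlow (eps / 2)) as [N1 HN1]; [lra|].
  destruct (log_rate_upper z C (fun n => conj (renewal_pos (S n) ltac:(lia))
                                               (renewal_bounded C Hsum HC n)) eps Heps) as [N2 HN2].
  exists (N1 + N2)%nat; intros n Hn. unfold Rdist; rewrite Rminus_0_r.
  specialize (HN1 n ltac:(lia)); specialize (HN2 n ltac:(lia)).
  apply Rabs_def1; lra.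
Qed.

Lemma renewal_supercritical p :
  1 < p -> infinite_sum (fun n => psi (S n)) p ->
  ~ Un_cv (fun n => ln (z (S n)) / INR (S n)) 0.
Proof.
  intros Hp Hsum Hcv.
  destruct (Hsum (p - 1)) as [N HN]; [lra|]. specialize (HN N (le_n _)).
  unfold Rdist in HN; apply Rabs_def2 in HN. rewrite <- rsum_sum_f_R0 in HN.
  set (T := S N). set (mass := rsum T (fun i => psi (S i))).
  assert (Hmass : 1 < mass) by (unfold mass, T; lra).
  assert (HT : 0 < INR T) by (apply lt_0_INR; unfold T; lia).
  set (s := ln mass / INR T).
  assert (Hs : 0 < s).
  { apply Rdiv_lt_0_compat; [rewrite <- ln_1; apply ln_increasing|]; lra. }
  destruct (renewal_exp_lower_bound psi z s T psi_nonneg renewal_pos renewal_super)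
    as [D [HD Hlow]].
  { intros n Hn.
    apply Rle_trans with (rsum T (fun i => psi (S i) * exp (- s * INR (S i)))).
    - apply Rle_trans with (exp (- s * INR T) * mass).
      + unfold s. replace (- (ln mass / INR T) * INR T) with (- ln mass) by (field; lra).
        rewrite exp_Ropp, exp_ln by lra. right; field; lra.
      + unfold mass; rewrite <- rsum_scal_l. apply rsum_le; intros i Hi. rewrite Rmult_comm.
        apply Rmult_le_compat_l; [apply psi_nonneg|apply exp_le_compat].
        apply le_INR in Hi. nra.
    - apply rsum_mono; [exact Hn|]. intros i.
      apply Rmult_le_pos; [apply psi_nonneg|left; apply exp_pos]. }
  destruct (log_rate_lower z s D HD Hlow (s / 2)) as [N1 HN1]; [lra|].
  destruct (Hcv (s / 2)) as [N2 HN2]; [lra|].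
  specialize (HN1 (N1 + N2)%nat ltac:(lia)); specialize (HN2 (N1 + N2)%nat ltac:(lia)).
  unfold Rdist in HN2; rewrite Rminus_0_r in HN2; apply Rabs_def2 in HN2. lra.
Qed.
End Renewal.

Definition esg (x : R) (b : bool) : R := exp (x * sgn b).

Lemma cosh_esg x : cosh x = (esg x true + esg x false) / 2.
Proof. unfold cosh, esg, sgn; do 3 f_equal; ring. Qed.

Lemma esg_plus x y b : esg (x + y) b = esg x b * esg y b.
Proof. unfold esg; rewrite <- exp_plus; f_equal; ring. Qed.

Lemma cosh_pos x : 0 < cosh x.
Proof. unfold cosh; pose proof (exp_pos x); pose proof (exp_pos (- x)); lra. Qed.

Lemma mpow_Q_1 x y : mpow Q 1 x y = Q x y.
Proof. destruct x as [[|] [|]], y as [[|] [|]]; cbv -[Rmult Rplus Rdiv]; lra. Qed.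

(* After two steps both coordinates of X are fresh signs. *)
Lemma mpow_Q_ge2 n x y : mpow Q (S (S n)) x y = 1 / 4.
Proof.
  revert y; induction n as [|n IHn]; intros y;
    change (mpow Q (S (S ?m)) x y) with (sumS (fun z => mpow Q (S m) x z * Q z y));
    unfold sumS; [rewrite !mpow_Q_1|rewrite !IHn];
    destruct x as [[|] [|]], y as [[|] [|]]; unfold Q; simpl; lra.
Qed.

Section TransferMatrix.
Variables (K : nat -> R) (a0 a1 beta : R).

Definition lambda_cosh : R :=
  K 1%nat * cosh ((a0 + a1) * beta) + (1 - K 1%nat) * (cosh (a0 * beta) * cosh (a1 * beta)).

Lemma lambda_formula_cosh : lambda_formula K a0 a1 beta = lambda_cosh.
Proof.
  unfold lambda_formula, lambda_cosh.
  pose proof (cosh_pos (a0 * beta)); pose proof (cosh_pos (a1 * beta)).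
  field; lra.
Qed.

Lemma lambda_cosh_pos : 0 < K 1%nat <= 1 -> 0 < lambda_cosh.
Proof.
  intros HK. unfold lambda_cosh.
  pose proof (cosh_pos ((a0 + a1) * beta)); pose proof (cosh_pos (a0 * beta));
    pose proof (cosh_pos (a1 * beta)).
  assert (0 < K 1%nat * cosh ((a0 + a1) * beta)) by (apply Rmult_lt_0_compat; lra).
  assert (0 <= (1 - K 1%nat) * (cosh (a0 * beta) * cosh (a1 * beta)))
    by (apply Rmult_le_pos; [lra|apply Rmult_le_pos; lra]).
  lra.
Qed.

Definition boltzmann_weight (y : Sigma) : R := esg (a0 * beta) (snd y) * esg (a1 * beta) (fst y).

Lemma exp_fobs y : exp (beta * fobs a0 a1 y + 0) = boltzmann_weight y.
Proof. unfold boltzmann_weight, esg, fobs; rewrite <- exp_plus; f_equal; ring. Qed.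

Definition A0 : mat := fun x y => boltzmann_weight y * (K 1%nat * Q x y + (1 - K 1%nat) / 4).

Lemma sum_Mmat x y n :
  sum_f_R0 (fun n => Mmat K a0 a1 (S n) beta 0 x y) n =
  boltzmann_weight y / 4 * sum_f_R0 (fun n => K (S n)) n +
  K 1%nat * boltzmann_weight y * (Q x y - 1 / 4).
Proof.
  induction n as [|n IHn]; simpl.
  - unfold Mmat; rewrite mpow_Q_1, exp_fobs; field.
  - rewrite IHn; unfold Mmat; rewrite mpow_Q_ge2, exp_fobs; field.
Qed.

Lemma is_A0_A0 : infinite_sum (fun n => K (S n)) 1 -> is_A0 K a0 a1 beta A0.
Proof.
  intros HK x y. eapply Un_cv_ext; [intros n; symmetry; apply sum_Mmat|].
  replace (A0 x y) with (boltzmann_weight y / 4 * 1 + K 1%nat * boltzmann_weight y * (Q x y - 1 / 4))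
    by (unfold A0; field).
  now apply Un_cv_affine.
Qed.

Lemma is_A0_unique A : infinite_sum (fun n => K (S n)) 1 -> is_A0 K a0 a1 beta A -> A = A0.
Proof.
  intros HK HA. do 2 (apply functional_extensionality; intro).
  eapply uniqueness_sum; [apply HA|now apply is_A0_A0].
Qed.

Definition A0_eigvec (x : Sigma) : R :=
  K 1%nat / 2 * esg (a1 * beta) (snd x) + (1 - K 1%nat) / 2 * cosh (a1 * beta).

Definition A0_covec (y : Sigma) : R := esg (a0 * beta) (snd y) / 2.

Lemma A0_fst_invariant v : fst_invariant (mvec A0 v).
Proof. intros p p' s; reflexivity. Qed.

Lemma A0_rank_one v : fst_invariant v ->
  forall x, mvec A0 v x = A0_eigvec x * sumS (fun y => A0_covec y * v y).
Proof.
  intros Hv x. unfold mvec, sumS, A0, A0_eigvec, A0_covec, boltzmann_weight.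
  rewrite (Hv true false true), (Hv true false false), (cosh_esg (a1 * beta)).
  destruct x as [p [|]]; unfold Q; simpl; field.
Qed.

Lemma A0_covec_eigvec : sumS (fun y => A0_covec y * A0_eigvec y) = lambda_cosh.
Proof.
  unfold sumS, A0_covec, A0_eigvec, lambda_cosh.
  replace ((a0 + a1) * beta) with (a0 * beta + a1 * beta) by ring.
  rewrite !cosh_esg, !esg_plus; simpl; field.
Qed.

Lemma A0_eigvec_pos x : 0 < K 1%nat <= 1 -> 0 < A0_eigvec x.
Proof.
  intros HK. unfold A0_eigvec, esg.
  pose proof (exp_pos (a1 * beta * sgn (snd x))); pose proof (cosh_pos (a1 * beta)).
  apply Rplus_lt_le_0_compat; [apply Rmult_lt_0_compat|apply Rmult_le_pos]; lra.
Qed.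

Lemma PF_eigenvalue_A0 : 0 < K 1%nat <= 1 -> PF_eigenvalue A0 lambda_cosh.
Proof.
  intros HK. rewrite <- A0_covec_eigvec.
  apply PF_eigenvalue_rank_one; [apply A0_fst_invariant|apply A0_rank_one| |intros x|].
  - intros p p' s; reflexivity.
  - now apply A0_eigvec_pos.
  - rewrite A0_covec_eigvec. left; now apply lambda_cosh_pos.
Qed.
End TransferMatrix.

Section PartitionFunction.
Variables (K : nat -> R) (beta h : R).

Lemma Zfuel_enough f1 f2 w N :
  (N <= f1)%nat -> (N <= f2)%nat -> Zfuel K w beta h f1 N = Zfuel K w beta h f2 N.
Proof.
  revert f2 N; induction f1 as [|f1 IHf1]; intros f2 N H1 H2.
  - replace N with O by lia. now destruct f2.
  - destruct N as [|N]; [now destruct f2|]. destruct f2 as [|f2]; [lia|]. cbn [Zfuel].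
    apply rsum_ext; intros i Hi. now rewrite (IHf1 f2) by lia.
Qed.

Lemma Zfuel_env f w w' N :
  (forall j, (1 <= j <= N)%nat -> w j = w' j) -> Zfuel K w beta h f N = Zfuel K w' beta h f N.
Proof.
  revert N; induction f as [|f IHf]; intros N Hw; destruct N as [|N]; try reflexivity.
  cbn [Zfuel]. apply rsum_ext; intros i Hi.
  rewrite (IHf (S N - S i)%nat), (Hw (S N)) by (try (intros; apply Hw); lia). reflexivity.
Qed.

Lemma Zpart_succ w n :
  Zpart K w beta h (S n) =
  rsum (S n) (fun i => Zpart K w beta h (n - i) * K (S i) * exp (beta * w (S n) + h)).
Proof.
  unfold Zpart at 1; cbn [Zfuel]. apply rsum_ext; intros i Hi.
  unfold Zpart; now rewrite (Zfuel_enough n (n - i)) by lia.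
Qed.
End PartitionFunction.

Section AnnealedRecursion.
Variables (K : nat -> R) (a0 a1 beta h : R).

Definition Zeps (e : nat -> R) (m : nat) : R := Zpart K (omega a0 a1 e) beta h m.

Lemma Zeps_depends_below m : depends_below (S m) (fun e => Zeps e m).
Proof.
  intros e e' He. unfold Zeps, Zpart. apply Zfuel_env; intros j Hj.
  unfold omega; rewrite (He j), (He (pred j)) by lia; reflexivity.
Qed.

(* The annealed partition function tilted by the last sign, which also enters omega_{n+1}. *)
Definition EZtilt (n : nat) : R := eps_avg (S n) (fun e => Zeps e n * exp (a1 * beta * e n)).

Lemma avg_Zeps_fresh m n g :
  (m < n)%nat -> eps_avg (S n) (fun e => Zeps e m * g (e n)) = EZ K a0 a1 beta h m * avg_pm g.
Proof.
  intros Hmn. rewrite eps_avg_mul_last.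
  - unfold EZ; f_equal. apply (eps_avg_unused (S m)); [apply Zeps_depends_below|lia].
  - apply (depends_below_mono (S m)); [lia|apply Zeps_depends_below].
Qed.

Definition last_renewal_sum (n : nat) : R :=
  K 1%nat * exp h * EZtilt n +
  rsum n (fun j => K (S (S j)) * exp h * cosh (a1 * beta) * EZ K a0 a1 beta h (n - S j)).

(* Decompose Z_{n+1} on the last renewal before n+1; only the gap-1 term sees eps_n twice. *)
Lemma avg_Zeps_succ_mul n g :
  eps_avg (S (S n)) (fun e => Zeps e (S n) * g (e (S n))) =
  last_renewal_sum n * avg_pm (fun s => exp (a0 * beta * s) * g s).
Proof.
  set (F e := rsum (S n) (fun i => K (S i) * exp h * (Zeps e (n - i) * exp (a1 * beta * e n)))).
  rewrite (eps_avg_ext _ _ (fun e => F e * (fun s => exp (a0 * beta * s) * g s) (e (S n)))).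
  2: { intros e.
       enough (Hz : Zeps e (S n) = F e * exp (a0 * beta * e (S n))) by (rewrite Hz; ring).
       unfold Zeps at 1, F. rewrite Zpart_succ, (Rmult_comm (rsum _ _)), <- rsum_scal_l.
       apply rsum_ext; intros i _.
       change (omega a0 a1 e (S n)) with (a0 * e (S n) + a1 * e n).
       replace (beta * (a0 * e (S n) + a1 * e n) + h) with (h + a1 * beta * e n + a0 * beta * e (S n))
         by ring.
       rewrite !exp_plus; unfold Zeps; ring. }
  rewrite (eps_avg_mul_last (S n) F (fun s => exp (a0 * beta * s) * g s)); [f_equal|].
  - unfold F; rewrite eps_avg_rsum, rsum_first, Nat.sub_0_r, eps_avg_scal_l.
    unfold last_renewal_sum, EZtilt; f_equal.
    apply rsum_ext; intros j Hj.
    rewrite eps_avg_scal_l, (avg_Zeps_fresh (n - S j) n (fun s => exp (a1 * beta * s))), avg_pm_exp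
      by lia.
    ring.
  - intros e e' He. unfold F; apply rsum_ext; intros i Hi.
    rewrite (Zeps_depends_below (n - i) e e'), (He n) by (try (intros; apply He); lia).
    reflexivity.
Qed.

Lemma EZ_succ n : EZ K a0 a1 beta h (S n) = cosh (a0 * beta) * last_renewal_sum n.
Proof.
  unfold EZ. rewrite (eps_avg_ext _ _ (fun e => Zeps e (S n) * (fun _ => 1) (e (S n))))
    by (intros; unfold Zeps; ring).
  rewrite (avg_Zeps_succ_mul n (fun _ => 1)), <- avg_pm_exp. unfold avg_pm; field.
Qed.

Lemma EZtilt_succ n : EZtilt (S n) = cosh ((a0 + a1) * beta) * last_renewal_sum n.
Proof.
  unfold EZtilt. rewrite (avg_Zeps_succ_mul n (fun s => exp (a1 * beta * s))), <- avg_pm_exp.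
  unfold avg_pm.
  rewrite Rmult_comm, <- !exp_plus. do 4 f_equal; ring.
Qed.

Lemma EZ_0 : EZ K a0 a1 beta h 0 = 1.
Proof. unfold EZ, Zpart; simpl; field. Qed.

Lemma EZtilt_0 : EZtilt 0 = cosh (a1 * beta).
Proof.
  unfold EZtilt. rewrite <- avg_pm_exp.
  rewrite (eps_avg_ext _ _ (fun e => (fun _ => 1) e * exp (a1 * beta * e O))) by reflexivity.
  rewrite (eps_avg_mul_last 0 (fun _ => 1) (fun s => exp (a1 * beta * s)))
    by (intros ? ? ?; reflexivity).
  simpl; ring.
Qed.

Definition renewal_weight (t : nat) : R :=
  exp h * K t *
  (if Nat.eqb t 1 then cosh ((a0 + a1) * beta) else cosh (a0 * beta) * cosh (a1 * beta)).

Definition renewal_source (t : nat) : R :=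
  exp h * K t * (cosh (a0 * beta) * cosh (a1 * beta)).

Lemma EZ_renewal n :
  EZ K a0 a1 beta h (S n) =
  rsum n (fun i => renewal_weight (S i) * EZ K a0 a1 beta h (n - i)) + renewal_source (S n).
Proof.
  rewrite EZ_succ. unfold last_renewal_sum. destruct n as [|m].
  - rewrite EZtilt_0; unfold renewal_source; simpl; ring.
  - rewrite EZtilt_succ.
    rewrite (rsum_first m (fun i => renewal_weight (S i) * EZ K a0 a1 beta h (S m - i))).
    change (rsum (S m) ?f) with (rsum m f + f m); cbv beta.
    rewrite Nat.sub_0_r, (EZ_succ m), Nat.sub_diag, EZ_0.
    rewrite (rsum_ext m (fun i => renewal_weight (S (S i)) * _)
      (fun i => cosh (a0 * beta) *
                (K (S (S i)) * exp h * cosh (a1 * beta) * EZ K a0 a1 beta h (S m - S i))))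
      by (intros; unfold renewal_weight; simpl; ring).
    rewrite rsum_scal_l. unfold renewal_weight, renewal_source; simpl; ring.
Qed.
End AnnealedRecursion.

Section AnnealedCriticalPoint.
Variables (K : nat -> R) (a0 a1 beta : R).
Hypothesis K_pos : forall n : nat, (1 <= n)%nat -> 0 < K n.
Hypothesis K_sum : infinite_sum (fun n => K (S n)) 1.

Lemma K1_range : 0 < K 1%nat <= 1.
Proof.
  split; [apply K_pos; lia|].
  apply (infinite_sum_partial_le (fun n => K (S n)) 1 (fun n => Rlt_le _ _ (K_pos (S n) ltac:(lia)))
           K_sum O).
Qed.

Lemma renewal_weight_sum h :
  infinite_sum (fun n => renewal_weight K a0 a1 beta h (S n)) (exp h * lambda_cosh K a0 a1 beta).
Proof.
  set (c := exp h * (cosh (a0 * beta) * cosh (a1 * beta))).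
  set (d := exp h * K 1%nat * (cosh ((a0 + a1) * beta) - cosh (a0 * beta) * cosh (a1 * beta))).
  apply Un_cv_ext with (un := fun n => c * sum_f_R0 (fun n => K (S n)) n + d).
  - intros n; induction n as [|n IHn]; simpl; [|rewrite <- IHn];
      unfold c, d, renewal_weight; simpl; ring.
  - replace (exp h * lambda_cosh K a0 a1 beta) with (c * 1 + d) by (unfold c, d, lambda_cosh; ring).
    now apply Un_cv_affine.
Qed.

Section RenewalWeights.
Variable h : R.

Lemma renewal_weight_nonneg t : 0 <= renewal_weight K a0 a1 beta h (S t).
Proof.
  unfold renewal_weight. pose proof (K_pos (S t) ltac:(lia)).
  pose proof (cosh_pos ((a0 + a1) * beta)); pose proof (cosh_pos (a0 * beta));
    pose proof (cosh_pos (a1 * beta)); pose proof (exp_pos h).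
  apply Rmult_le_pos; [apply Rmult_le_pos; lra|].
  destruct (Nat.eqb (S t) 1); [lra|left; now apply Rmult_lt_0_compat].
Qed.

Lemma renewal_source_pos t : 0 < renewal_source K a0 a1 beta h (S t).
Proof.
  unfold renewal_source. pose proof (K_pos (S t) ltac:(lia)).
  pose proof (cosh_pos (a0 * beta)); pose proof (cosh_pos (a1 * beta)); pose proof (exp_pos h).
  apply Rmult_lt_0_compat; [apply Rmult_lt_0_compat|apply Rmult_lt_0_compat]; auto.
Qed.

Lemma renewal_source_le t :
  renewal_source K a0 a1 beta h (S t) <=
  (1 + cosh (a0 * beta) * cosh (a1 * beta) / cosh ((a0 + a1) * beta)) *
  renewal_weight K a0 a1 beta h (S t).
Proof.
  pose proof (renewal_weight_nonneg t).
  pose proof (cosh_pos ((a0 + a1) * beta)); pose proof (cosh_pos (a0 * beta));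
    pose proof (cosh_pos (a1 * beta)).
  set (r := cosh (a0 * beta) * cosh (a1 * beta) / cosh ((a0 + a1) * beta)).
  assert (Hr : 0 <= r) by (unfold r; apply Rle_mult_inv_pos; nra).
  enough (Hk : renewal_source K a0 a1 beta h (S t) = r * renewal_weight K a0 a1 beta h (S t) \/
               renewal_source K a0 a1 beta h (S t) = renewal_weight K a0 a1 beta h (S t)) by
    (destruct Hk as [-> | ->]; nra).
  unfold renewal_source, renewal_weight, r. destruct t as [|t]; simpl; [left; field; lra|right; ring].
Qed.
End RenewalWeights.

Lemma annealed_fe_zero_at_critical : annealed_fe_zero K a0 a1 beta (- ln (lambda_cosh K a0 a1 beta)).
Proof.
  set (h := - ln (lambda_cosh K a0 a1 beta)). pose proof (lambda_cosh_pos K a0 a1 beta K1_range).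
  assert (Hsum : infinite_sum (fun n => renewal_weight K a0 a1 beta h (S n)) 1).
  { replace 1 with (exp h * lambda_cosh K a0 a1 beta); [apply renewal_weight_sum|].
    unfold h; rewrite exp_Ropp, exp_ln by lra; field; lra. }
  exact (renewal_critical _ _ _ (renewal_weight_nonneg h) (renewal_source_pos h)
           (EZ_renewal K a0 a1 beta h) _ Hsum (renewal_source_le h)).
Qed.

Lemma annealed_fe_zero_le h :
  annealed_fe_zero K a0 a1 beta h -> h <= - ln (lambda_cosh K a0 a1 beta).
Proof.
  intros Hfe. pose proof (lambda_cosh_pos K a0 a1 beta K1_range).
  apply Rnot_lt_le; intros Hh.
  apply (renewal_supercritical _ _ _ (renewal_weight_nonneg h) (renewal_source_pos h)
           (EZ_renewal K a0 a1 beta h) (exp h * lambda_cosh K a0 a1 beta));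
    [|apply renewal_weight_sum|exact Hfe].
  apply exp_increasing in Hh. rewrite exp_Ropp, exp_ln in Hh by lra.
  apply (Rmult_lt_compat_r (lambda_cosh K a0 a1 beta)) in Hh; [|lra].
  rewrite Rinv_l in Hh; lra.
Qed.
End AnnealedCriticalPoint.

Theorem mainTheorem2 (K : nat -> R) (a0 a1 beta : R)
  (HKpos : forall n : nat, (1 <= n)%nat -> 0 < K n)
  (HKprob : infinite_sum (fun n => K (S n)) 1) :
  (exists A : mat, is_A0 K a0 a1 beta A) /\
  (forall A : mat, is_A0 K a0 a1 beta A ->
     PF_eigenvalue A (lambda_formula K a0 a1 beta)) /\
  is_hca K a0 a1 beta (- ln (lambda_formula K a0 a1 beta)).
Proof.
  rewrite lambda_formula_cosh. split; [|split].
  - exists (A0 K a0 a1 beta); now apply is_A0_A0.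
  - intros A HA. rewrite (is_A0_unique K a0 a1 beta A HKprob HA).
    now apply PF_eigenvalue_A0, K1_range.
  - split.
    + intros h Hh. now apply annealed_fe_zero_le.
    + intros b Hb. now apply Hb, annealed_fe_zero_at_critical.
Qed.
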